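(* Let $A=\bigoplus_k A_k$ and $B=\bigoplus_k B_k$ be graded Lie algebras and let $(\alpha,\beta)$ be a derivatively knitted pair of representations for $(A,B)$. Then the graded vector space $A\oplus B$ with grading $(A\oplus B)_k:=A_k\oplus B_k$ becomes a graded Lie algebra, denoted $A\oplus_{(\alpha,\beta)}B$, with the bracket (for homogeneous elements, extended bilinearly) $$[(a_1,b_1),(a_2,b_2)] := \Bigl([a_1,a_2] + \beta(b_1)a_2 - (-1)^{|b_2||a_1|}\beta(b_2)a_1,\ [b_1,b_2] + \alpha(a_1)b_2 - (-1)^{|a_2||b_1|}\alpha(a_2)b_1\Bigr).$$ That is, this bracket is bilinear, of degree $0$, graded anticommutative and satisfies the graded Jacobi identity.
   Context: All gradings are either by $\mathbb Z$ or by $\mathbb Z_2$ (the same for all objects considered); $|x|$ denotes the degree of a homogeneous element $x$. For a graded vector space $V$, $\mathrm{End}(V)$ denotes the graded Lie algebra of linear endomorphisms of $V$ (graded by degree), with the graded commutator $[S,T]=ST-(-1)^{|S||T|}TS$. A derivatively knitted pair of representations $(\alpha,\beta)$ for graded Lie algebras $(A,B)$ consists of graded Lie algebra homomorphisms (of degree $0$) $\alpha:A\to\mathrm{End}(B)$ and $\beta:B\to\mathrm{End}(A)$ such that for all homogeneous $a,a_1,a_2\in A$ and $b,b_1,b_2\in B$: $$\alpha(a)[b_1,b_2] = [\alpha(a)b_1,b_2] + (-1)^{|a||b_1|}[b_1,\alpha(a)b_2] - \Bigl((-1)^{|a||b_1|}\alpha(\beta(b_1)a)b_2 - (-1)^{(|a|+|b_1|)|b_2|}\alpha(\beta(b_2)a)b_1\Bigr),$$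 $$\beta(b)[a_1,a_2] = [\beta(b)a_1,a_2] + (-1)^{|b||a_1|}[a_1,\beta(b)a_2] - \Bigl((-1)^{|b||a_1|}\beta(\alpha(a_1)b)a_2 - (-1)^{(|b|+|a_1|)|a_2|}\beta(\alpha(a_2)b)a_1\Bigr).$$ For ungraded Lie algebras all degrees are taken to be $0$. *)

From HB Require Import structures.
From mathcomp Require Import all_boot all_order all_algebra.
Set Implicit Arguments. Unset Strict Implicit. Unset Printing Implicit Defensive.
Import GRing.Theory.
Local Open Scope ring_scope.

Inductive grading := ZGrading | Z2Grading.

Definition degT (g : grading) : zmodType :=
  match g with ZGrading => int | Z2Grading => 'Z_2 end.

Definition par (g : grading) : degT g -> bool :=
  match g as g0 return degT g0 -> bool with
  | ZGrading => fun x : int => odd `|x|%N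
  | Z2Grading => fun x : 'Z_2 => odd (val x)
  end.

Definition gsign (K : fieldType) (g : grading) (i j : degT g) : K :=
  (-1) ^+ (par i && par j).

Section Defs.
Variables (K : fieldType) (g : grading).
Local Notation D := (degT g).

Definition is_subspace (V : lmodType K) (P : pred V) : Prop :=
  0 \in P /\ forall (c : K) (u v : V), u \in P -> v \in P -> c *: u + v \in P.

Definition graded_space (V : lmodType K) (H : D -> pred V) : Prop :=
  [/\ forall k, is_subspace (H k),
      forall v : V, exists (s : seq D) (f : D -> V),
        [/\ uniq s, forall k, f k \in H k & v = \sum_(k <- s) f k]
    & forall (s : seq D) (f : D -> V), uniq s -> (forall k, f k \in H k) ->
        \sum_(k <- s) f k = 0 -> forall k, k \in s -> f k = 0].

Definition bilinear_map (U V W : lmodType K) (f : U -> V -> W) : Prop :=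
  (forall (c : K) u1 u2 v, f (c *: u1 + u2) v = c *: f u1 v + f u2 v) /\
  (forall u (c : K) v1 v2, f u (c *: v1 + v2) = c *: f u v1 + f u v2).

Definition graded_lie (V : lmodType K) (H : D -> pred V) (br : V -> V -> V)
  : Prop :=
  [/\ graded_space H, bilinear_map br,
      forall i j x y, x \in H i -> y \in H j -> br x y \in H (i + j),
      forall i j x y, x \in H i -> y \in H j ->
        br x y = - (gsign K i j *: br y x)
    & forall i j l x y z, x \in H i -> y \in H j -> z \in H l ->
        gsign K i l *: br x (br y z) + gsign K j i *: br y (br z x)
        + gsign K l j *: br z (br x y) = 0].

(* rho : A -> End(B) is a degree-0 homomorphism of graded Lie algebras, where
   End(B) is graded by degree (T has degree k iff T (H i) <= H (i + k)) and
   carries the graded commutator. *)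
Definition end_rep (A B : lmodType K) (HA : D -> pred A) (brA : A -> A -> A)
  (HB : D -> pred B) (rho : A -> B -> B) : Prop :=
  [/\ bilinear_map rho,
      forall k a, a \in HA k -> forall i b, b \in HB i -> rho a b \in HB (i + k)
    & forall i j a1 a2, a1 \in HA i -> a2 \in HA j -> forall b,
        rho (brA a1 a2) b = rho a1 (rho a2 b) - gsign K i j *: rho a2 (rho a1 b)].

Definition knitted_pair (A B : lmodType K)
  (HA : D -> pred A) (brA : A -> A -> A) (HB : D -> pred B) (brB : B -> B -> B)
  (alpha : A -> B -> B) (beta : B -> A -> A) : Prop :=
  [/\ end_rep HA brA HB alpha, end_rep HB brB HA beta,
      forall i j l a b1 b2, a \in HA i -> b1 \in HB j -> b2 \in HB l ->
        alpha a (brB b1 b2) =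
          brB (alpha a b1) b2 + gsign K i j *: brB b1 (alpha a b2)
          - (gsign K i j *: alpha (beta b1 a) b2
             - gsign K (i + j) l *: alpha (beta b2 a) b1)
    & forall i j l b a1 a2, b \in HB i -> a1 \in HA j -> a2 \in HA l ->
        beta b (brA a1 a2) =
          brA (beta b a1) a2 + gsign K i j *: brA a1 (beta b a2)
          - (gsign K i j *: beta (alpha a1 b) a2
             - gsign K (i + j) l *: beta (alpha a2 b) a1)].

Definition sum_grading (A B : lmodType K) (HA : D -> pred A) (HB : D -> pred B)
  : D -> pred (A * B)%type :=
  fun k => [pred x : (A * B)%type | (x.1 \in HA k) && (x.2 \in HB k)].

End Defs.

From HB Require Import structures.
From mathcomp Require Import all_boot all_order all_algebra zify.
From Stdlib Require Import ClassicalEpsilon.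
Set Implicit Arguments. Unset Strict Implicit. Unset Printing Implicit Defensive.
Import GRing.Theory.
Local Open Scope ring_scope.

(* The sign (-1)^(|x||y|) in the bracket only makes sense for homogeneous x, y.
   Splitting v = v_even + v_odd (a linear decomposition, well defined because
   the grading is direct), (b, a) |-> (-1)^(|b||a|) beta b a extends bilinearly
   as beta b a - 2 beta b_odd a_odd, and likewise for alpha; this defines the
   bracket on all of A (+) B and makes it bilinear.  The remaining axioms only
   need to be checked on homogeneous elements.  The Jacobiator is additive and
   invariant under cyclic rotation, so it suffices to treat pure elements of
   types AAA, AAB, ABB and BBB: the first and last are the Jacobi identities of
   A and B; in the mixed cases one component is the representation property of
   alpha or beta, the other the knitting identity together with antisymmetry. *)

(* Proves an identity between sums of (possibly negated) terms of a zmodType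
   by cancelling each [- t] against an occurrence of [t]; the trailing [+ 0]
   gives every term a right neighbour, as [addKr] requires. *)
Lemma zmod_tail0 (V : zmodType) (v : V) : v + 0 = 0 -> v = 0.
Proof. by rewrite addr0. Qed.

Ltac zmod_front t := do 60? rewrite (addrCA _ t).
Ltac zmod_cancel :=
  match goal with
  | |- 0 = 0 => reflexivity
  | |- ?S = 0 => match S with context [- ?t] =>
      zmod_front t; zmod_front (- t); rewrite addKr; zmod_cancel end
  end.
Ltac zmod_solve :=
  apply/eqP; rewrite -subr_eq0; apply/eqP;
  rewrite ?(mulr2n, scalerDr, scalerN, scaleN1r, scale1r, scaleNr, opprD,
            opprK, oppr0, addr0, add0r, scaler0, scale0r);
  apply: zmod_tail0; rewrite -?addrA; zmod_cancel.

Lemma odd_absz_add (i j : int) : odd `|i + j| = odd `|i| (+) odd `|j|.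
Proof.
by case: (boolP (odd _)); case: (boolP (odd `|i|)); case: (boolP (odd `|j|));
  move=> //=; lia.
Qed.

Lemma par_add (g : grading) (i j : degT g) : par (i + j) = par i (+) par j.
Proof.
case: g i j => /= i j; first exact: odd_absz_add.
by rewrite odd_mod ?oddD.
Qed.

Ltac gsign_cases :=
  rewrite /gsign ?par_add;
  repeat match goal with |- context [par ?k] => case: (par k) end;
  rewrite /= ?expr0 ?expr1.

Section Subspace.
Variables (K : fieldType) (V : lmodType K) (P : pred V).
Hypothesis subP : is_subspace P.

Lemma subspace0 : 0 \in P. Proof. by case: subP. Qed.

Lemma subspaceZD c u v : u \in P -> v \in P -> c *: u + v \in P.
Proof. by case: subP => _; apply. Qed.

Lemma subspaceD u v : u \in P -> v \in P -> u + v \in P.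
Proof. by move=> Pu Pv; have := subspaceZD 1 Pu Pv; rewrite scale1r. Qed.

Lemma subspaceZ c u : u \in P -> c *: u \in P.
Proof. by move=> Pu; have := subspaceZD c Pu subspace0; rewrite addr0. Qed.

Lemma subspaceN u : u \in P -> - u \in P.
Proof. by move=> Pu; rewrite -scaleN1r subspaceZ. Qed.

End Subspace.

Section HomogeneousSums.
Variables (K : fieldType) (g : grading) (V : lmodType K) (H : degT g -> pred V).
Hypothesis subH : forall k, is_subspace (H k).

Lemma regroup_hom_sum (l : seq (degT g * V)) :
  all (fun p => p.2 \in H p.1) l ->
  exists s (f : degT g -> V), [/\ uniq s, forall k, f k \in H k,
    forall k, k \notin s -> f k = 0, {subset s <= map fst l}
    & \sum_(p <- l) p.2 = \sum_(k <- s) f k].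
Proof.
elim: l => [|[k x] l IHl] /=.
  move=> _; exists [::], (fun=> 0); split=> //; first by move=> k; apply: subspace0.
  by rewrite !big_nil.
case/andP=> Hx /IHl [s [f [s_uniq Hf f_out s_sub sum_l]]].
pose f' j := if j == k then x + f k else f j.
have Hf' j : f' j \in H j by rewrite /f'; case: eqP => [->|_] //; apply: subspaceD.
have [ks|ks] := boolP (k \in s).
- exists s, f'; split=> //.
  + move=> j js; rewrite /f'; case: eqP => [ejk|_]; last exact: f_out.
    by move: js; rewrite ejk ks.
  + by move=> j /s_sub; rewrite inE => ->; rewrite orbT.
  rewrite big_cons /= sum_l !(bigD1_seq k ks s_uniq) /= /f' eqxx addrA.
  by congr (_ + _); apply: eq_bigr => j /negPf ->.
- exists (k :: s), f'; split=> //.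
  + by rewrite /= ks.
  + by move=> j; rewrite inE negb_or => /andP[/negPf jk js]; rewrite /f' jk f_out.
  + by move=> j; rewrite !inE => /orP[->|/s_sub ->]; rewrite ?orbT.
  rewrite !big_cons /= sum_l /f' eqxx (f_out k ks) addr0; congr (_ + _).
  by apply: eq_big_seq => j js; case: eqP => // ejk; rewrite -ejk js in ks.
Qed.

Definition parity_span (b : bool) (v : V) := exists l : seq (degT g * V),
  all (fun p => (p.2 \in H p.1) && (par p.1 == b)) l /\ v = \sum_(p <- l) p.2.

Lemma parity_span0 b : parity_span b 0.
Proof. by exists [::]; rewrite big_nil. Qed.

Lemma parity_spanZD b c u v :
  parity_span b u -> parity_span b v -> parity_span b (c *: u + v).
Proof.
move=> [lu [Hlu ->]] [lv [Hlv ->]].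
exists (map (fun p => (p.1, c *: p.2)) lu ++ lv); split.
  rewrite all_cat Hlv andbT all_map; apply/allP => p /(allP Hlu) /andP[Hp bp].
  by rewrite /= bp andbT subspaceZ.
by rewrite big_cat big_map scaler_sumr.
Qed.

Lemma parity_spanB b u v :
  parity_span b u -> parity_span b v -> parity_span b (u - v).
Proof. by move=> Su Sv; rewrite addrC -scaleN1r; apply: parity_spanZD. Qed.

Lemma parity_span_hom k v : v \in H k -> parity_span (par k) v.
Proof. by move=> Hv; exists [:: (k, v)]; rewrite /= Hv eqxx big_seq1. Qed.

Lemma parity_span_regroup b v : parity_span b v ->
  exists s (f : degT g -> V), [/\ uniq s, forall k, f k \in H k,
    forall k, k \in s -> par k = b & v = \sum_(k <- s) f k].
Proof.
move=> [l [Hl ->]].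
have Hl' : all (fun p => p.2 \in H p.1) l by apply/allP => p /(allP Hl) /andP[].
have [s [f [s_uniq Hf _ s_sub ->]]] := regroup_hom_sum Hl'.
exists s, f; split=> // k /s_sub /mapP[p /(allP Hl) /andP[_ /eqP <-] ->] //.
Qed.

End HomogeneousSums.

Section OddPart.
Variables (K : fieldType) (g : grading) (V : lmodType K) (H : degT g -> pred V).
Hypothesis gradedH : graded_space H.

Let subH k : is_subspace (H k). Proof. by case: gradedH. Qed.

Lemma parity_span_direct e o :
  parity_span H false e -> parity_span H true o -> e + o = 0 -> e = 0.
Proof.
move=> /(parity_span_regroup subH) [se [fe [se_uniq Hfe se_even ->]]].
move=> /(parity_span_regroup subH) [so [fo [so_uniq Hfo so_odd ->]]].
pose f k := if par k then fo k else fe k.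
have s_uniq : uniq (se ++ so).
  rewrite cat_uniq se_uniq so_uniq andbT /=; apply/hasPn => k /so_odd odd_k.
  by apply/negP => /se_even; rewrite odd_k.
have Hf k : f k \in H k by rewrite /f; case: ifP.
have -> : \sum_(k <- se) fe k = \sum_(k <- se) f k.
  by apply: eq_big_seq => k /se_even even_k; rewrite /f even_k.
have -> : \sum_(k <- so) fo k = \sum_(k <- so) f k.
  by apply: eq_big_seq => k /so_odd odd_k; rewrite /f odd_k.
have [_ _ direct] := gradedH.
rewrite -big_cat => /(direct _ _ s_uniq Hf) f0.
by rewrite big1_seq // => k /andP[_ ks]; apply: f0; rewrite mem_cat ks.
Qed.

Lemma odd_part_exists v :
  exists o, parity_span H true o /\ parity_span H false (v - o).
Proof.
have [_ decompose _] := gradedH.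
have [s [f [_ Hf ->]]] := decompose v.
exists (\sum_(k <- s | par k) f k); split.
  exists (map (fun k => (k, f k)) [seq k <- s | par k]); split.
    rewrite all_map; apply/allP => k; rewrite mem_filter => /andP[odd_k _].
    by rewrite /= Hf odd_k.
  by rewrite big_map big_filter.
exists (map (fun k => (k, f k)) [seq k <- s | ~~ par k]); split.
  rewrite all_map; apply/allP => k; rewrite mem_filter => /andP[/negPf odd_k _].
  by rewrite /= Hf odd_k.
by rewrite big_map big_filter (bigID (@par g)) /= addrC addrK.
Qed.

Definition odd_part (v : V) : V :=
  epsilon (inhabits 0) (fun o => parity_span H true o /\ parity_span H false (v - o)).

Lemma odd_part_spec v :
  parity_span H true (odd_part v) /\ parity_span H false (v - odd_part v).
Proof. exact: epsilon_spec (odd_part_exists v). Qed.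

Lemma odd_part_unique v o :
  parity_span H true o -> parity_span H false (v - o) -> odd_part v = o.
Proof.
move=> So Se; have [Spo Spe] := odd_part_spec v.
have even_diff := parity_spanB subH Se Spe.
have odd_diff := parity_spanB subH So Spo.
have sum0 : v - o - (v - odd_part v) + (o - odd_part v) = 0 by zmod_solve.
have := parity_span_direct even_diff odd_diff sum0.
have -> : v - o - (v - odd_part v) = odd_part v - o by zmod_solve.
by move/eqP; rewrite subr_eq0 => /eqP.
Qed.

Lemma odd_partZD c u v : odd_part (c *: u + v) = c *: odd_part u + odd_part v.
Proof.
have [Ou Eu] := odd_part_spec u; have [Ov Ev] := odd_part_spec v.
apply: odd_part_unique; first exact: (parity_spanZD subH).
have -> : c *: u + v - (c *: odd_part u + odd_part v)
          = c *: (u - odd_part u) + (v - odd_part v) by zmod_solve.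
exact: (parity_spanZD subH).
Qed.

Lemma odd_part_hom k v : v \in H k -> odd_part v = if par k then v else 0.
Proof.
move=> /parity_span_hom; case: (par k) => Sv; apply: odd_part_unique => //.
- by rewrite subrr; apply: parity_span0.
- exact: parity_span0.
- by rewrite subr0.
Qed.

End OddPart.

Section Bilinear.
Variables (K : fieldType) (U V W : lmodType K) (f : U -> V -> W).
Hypothesis bf : bilinear_map f.

Lemma bilinZDl c u1 u2 v : f (c *: u1 + u2) v = c *: f u1 v + f u2 v.
Proof. by case: bf. Qed.

Lemma bilinZDr u c v1 v2 : f u (c *: v1 + v2) = c *: f u v1 + f u v2.
Proof. by case: bf. Qed.

Lemma bilin0l v : f 0 v = 0.
Proof.
have := bilinZDl 1 0 0 v; rewrite !scale1r addr0 -{1}[f 0 v]addr0.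
by move=> /addrI <-.
Qed.

Lemma bilin0r u : f u 0 = 0.
Proof.
have := bilinZDr u 1 0 0; rewrite !scale1r addr0 -{1}[f u 0]addr0.
by move=> /addrI <-.
Qed.

Lemma bilinZl c u v : f (c *: u) v = c *: f u v.
Proof. by have := bilinZDl c u 0 v; rewrite !addr0 bilin0l addr0. Qed.

Lemma bilinZr u c v : f u (c *: v) = c *: f u v.
Proof. by have := bilinZDr u c v 0; rewrite !addr0 bilin0r addr0. Qed.

Lemma bilinDl u1 u2 v : f (u1 + u2) v = f u1 v + f u2 v.
Proof. by have := bilinZDl 1 u1 u2 v; rewrite !scale1r. Qed.

Lemma bilinDr u v1 v2 : f u (v1 + v2) = f u v1 + f u v2.
Proof. by have := bilinZDr u 1 v1 v2; rewrite !scale1r. Qed.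

Lemma bilinNl u v : f (- u) v = - f u v.
Proof. by rewrite -scaleN1r bilinZl scaleN1r. Qed.

Lemma bilinNr u v : f u (- v) = - f u v.
Proof. by rewrite -scaleN1r bilinZr scaleN1r. Qed.

End Bilinear.

Section SignTwist.
Variables (K : fieldType) (g : grading) (U V W : lmodType K).
Variables (HU : degT g -> pred U) (HV : degT g -> pred V) (f : U -> V -> W).
Hypotheses (gradedU : graded_space HU) (gradedV : graded_space HV).
Hypothesis bf : bilinear_map f.

(* The bilinear extension of [(u, v) |-> (-1)^(|u||v|) f u v]: only the product
   of the odd parts changes sign. *)
Definition sign_twist (u : U) (v : V) : W :=
  f u v - f (odd_part HU u) (odd_part HV v) *+ 2.

Lemma sign_twist_hom i j u v :
  u \in HU i -> v \in HV j -> sign_twist u v = gsign K i j *: f u v.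
Proof.
move=> Hu Hv; rewrite /sign_twist (odd_part_hom gradedU Hu) (odd_part_hom gradedV Hv).
gsign_cases; rewrite ?(bilin0l bf, bilin0r bf) ?mul0rn ?subr0 ?scale1r //.
by rewrite mulr2n opprD addrA subrr add0r scaleN1r.
Qed.

Lemma sign_twist_bilinear : bilinear_map sign_twist.
Proof.
split=> [c u1 u2 v|u c v1 v2]; rewrite /sign_twist ?odd_partZD //
  ?(bilinZDl bf, bilinZDr bf); zmod_solve.
Qed.

End SignTwist.

Section KnittedSum.
Variables (K : fieldType) (g : grading) (A B : lmodType K).
Variables (HA : degT g -> pred A) (HB : degT g -> pred B).
Variables (brA : A -> A -> A) (brB : B -> B -> B).
Variables (alpha : A -> B -> B) (beta : B -> A -> A).
Hypotheses (lieA : graded_lie HA brA) (lieB : graded_lie HB brB).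
Hypothesis knitted : knitted_pair HA brA HB brB alpha beta.

Local Notation HAB := (sum_grading HA HB).

Let gradedA : graded_space HA. Proof. by case: lieA. Qed.
Let gradedB : graded_space HB. Proof. by case: lieB. Qed.
Let subA k : is_subspace (HA k). Proof. by case: gradedA. Qed.
Let subB k : is_subspace (HB k). Proof. by case: gradedB. Qed.
Let bilA : bilinear_map brA. Proof. by case: lieA. Qed.
Let bilB : bilinear_map brB. Proof. by case: lieB. Qed.
Let bil_alpha : bilinear_map alpha. Proof. by case: knitted => [[]]. Qed.
Let bil_beta : bilinear_map beta. Proof. by case: knitted => _ []. Qed.

Let degA i j x y : x \in HA i -> y \in HA j -> brA x y \in HA (i + j).
Proof. by case: lieA => _ _ deg _ _; apply: deg. Qed.
Let degB i j x y : x \in HB i -> y \in HB j -> brB x y \in HB (i + j).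
Proof. by case: lieB => _ _ deg _ _; apply: deg. Qed.
Let deg_alpha i k a b : a \in HA k -> b \in HB i -> alpha a b \in HB (i + k).
Proof. by case: knitted => [[_ deg _]] _ _ _ Ha Hb; apply: deg. Qed.
Let deg_beta i k b a : b \in HB k -> a \in HA i -> beta b a \in HA (i + k).
Proof. by case: knitted => _ [_ deg _] _ _ Hb Ha; apply: deg. Qed.

Let deg_alphaC i k a b : a \in HA k -> b \in HB i -> alpha a b \in HB (k + i).
Proof. by rewrite addrC; apply: deg_alpha. Qed.
Let deg_betaC i k b a : b \in HB k -> a \in HA i -> beta b a \in HA (k + i).
Proof. by rewrite addrC; apply: deg_beta. Qed.

Ltac hom_mem := first
  [ assumption
  | apply: (subspace0 (subA _)) | apply: (subspace0 (subB _))
  | apply: (subspaceD (subA _)); hom_mem | apply: (subspaceD (subB _)); hom_mem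
  | apply: (subspaceN (subA _)); hom_mem | apply: (subspaceN (subB _)); hom_mem
  | apply: (subspaceZ (subA _)); hom_mem | apply: (subspaceZ (subB _)); hom_mem
  | apply: degA; hom_mem | apply: degB; hom_mem
  | apply: deg_alpha; hom_mem | apply: deg_alphaC; hom_mem
  | apply: deg_beta; hom_mem | apply: deg_betaC; hom_mem ].

Ltac bilin_simp := rewrite ?(bilin0l bilA, bilin0r bilA, bilin0l bilB, bilin0r bilB,
  bilin0l bil_alpha, bilin0r bil_alpha, bilin0l bil_beta, bilin0r bil_beta,
  bilinNl bilA, bilinNr bilA, bilinNl bilB, bilinNr bilB,
  bilinNl bil_alpha, bilinNr bil_alpha, bilinNl bil_beta, bilinNr bil_beta,
  bilinZl bilA, bilinZr bilA, bilinZl bilB, bilinZr bilB,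
  bilinZl bil_alpha, bilinZr bil_alpha, bilinZl bil_beta, bilinZr bil_beta,
  addr0, add0r, subr0, sub0r, scaler0, oppr0).

Definition knitted_bracket (x y : A * B) : A * B :=
  (brA x.1 y.1 + beta x.2 y.1 - sign_twist HB HA beta y.2 x.1,
   brB x.2 y.2 + alpha x.1 y.2 - sign_twist HA HB alpha y.1 x.2).

Local Notation br := knitted_bracket.

Lemma mem_sum_grading k x : (x \in HAB k) = (x.1 \in HA k) && (x.2 \in HB k).
Proof. by []. Qed.

Lemma knitted_bracket_hom i j x y : x \in HAB i -> y \in HAB j ->
  br x y = (brA x.1 y.1 + beta x.2 y.1 - gsign K j i *: beta y.2 x.1,
            brB x.2 y.2 + alpha x.1 y.2 - gsign K j i *: alpha y.1 x.2).
Proof.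
rewrite !mem_sum_grading => /andP[Hx1 Hx2] /andP[Hy1 Hy2].
by rewrite /br (sign_twist_hom gradedB gradedA bil_beta Hy2 Hx1)
  (sign_twist_hom gradedA gradedB bil_alpha Hy1 Hx2).
Qed.

Lemma knitted_bracket_bilinear : bilinear_map br.
Proof.
have twB := sign_twist_bilinear gradedB gradedA bil_beta.
have twA := sign_twist_bilinear gradedA gradedB bil_alpha.
split=> [c x x' y|x c y y']; apply: injective_projections;
  rewrite /= ?(bilinZDl bilA, bilinZDl bilB, bilinZDl bil_alpha, bilinZDl bil_beta,
    bilinZDr bilA, bilinZDr bilB, bilinZDr bil_alpha, bilinZDr bil_beta,
    bilinZDl twA, bilinZDl twB, bilinZDr twA, bilinZDr twB); zmod_solve.
Qed.

Lemma knitted_bracket_deg i j x y : x \in HAB i -> y \in HAB j -> br x y \in HAB (i + j).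
Proof.
move=> Hx Hy; rewrite (knitted_bracket_hom Hx Hy) mem_sum_grading /=.
move: Hx Hy; rewrite !mem_sum_grading => /andP[Hx1 Hx2] /andP[Hy1 Hy2].
by apply/andP; split; hom_mem.
Qed.

Lemma knitted_bracket_anti i j x y : x \in HAB i -> y \in HAB j ->
  br x y = - (gsign K i j *: br y x).
Proof.
move=> Hx Hy; rewrite (knitted_bracket_hom Hx Hy) (knitted_bracket_hom Hy Hx).
move: Hx Hy; rewrite !mem_sum_grading => /andP[Hx1 Hx2] /andP[Hy1 Hy2].
case: lieA => _ _ _ antiA _; case: lieB => _ _ _ antiB _.
apply: injective_projections => /=.
- by rewrite (antiA _ _ _ _ Hx1 Hy1); gsign_cases; zmod_solve.
- by rewrite (antiB _ _ _ _ Hx2 Hy2); gsign_cases; zmod_solve.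
Qed.

Lemma sum_grading_graded : graded_space HAB.
Proof.
have subAB k : is_subspace (HAB k).
  split=> [|c x y]; rewrite !mem_sum_grading ?subspace0 // => /andP[Hx1 Hx2] /andP[Hy1 Hy2].
  by rewrite /= !subspaceZD.
split=> // [[a b]|s f s_uniq Hf sum0 k ks].
  have [_ decA _] := gradedA; have [_ decB _] := gradedB.
  have [sA [fA [_ HfA ->]]] := decA a; have [sB [fB [_ HfB ->]]] := decB b.
  pose l := [seq (k, (fA k, 0)) | k <- sA] ++ [seq (k, (0, fB k)) | k <- sB].
  have Hl : all (fun p => p.2 \in HAB p.1) l.
    by rewrite all_cat !all_map; apply/andP; split; apply/allP => k _;
      rewrite /= mem_sum_grading /= ?HfA ?HfB ?subspace0.
  have [s [f [s_uniq Hf _ _ sum_l]]] := regroup_hom_sum subAB Hl.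
  exists s, f; split=> //; rewrite -sum_l big_cat !big_map.
  by apply: injective_projections; rewrite /= !raddf_sum /= !big1_eq ?addr0 ?add0r.
have [_ _ dirA] := gradedA; have [_ _ dirB] := gradedB.
apply: injective_projections.
- apply: (dirA s (fst \o f)) => // [k'|]; first by case/andP: (Hf k').
  by rewrite -raddf_sum sum0.
- apply: (dirB s (snd \o f)) => // [k'|]; first by case/andP: (Hf k').
  by rewrite -raddf_sum sum0.
Qed.

Definition jacobiator (i j l : degT g) (x y z : A * B) : A * B :=
  gsign K i l *: br x (br y z) + gsign K j i *: br y (br z x)
  + gsign K l j *: br z (br x y).

Lemma jacobiator_rot i j l x y z : jacobiator i j l x y z = jacobiator j l i y z x.
Proof. by rewrite /jacobiator; zmod_solve. Qed.

Lemma jacobiatorDl i j l x x' y z :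
  jacobiator i j l (x + x') y z = jacobiator i j l x y z + jacobiator i j l x' y z.
Proof.
have bil := knitted_bracket_bilinear.
by rewrite /jacobiator !(bilinDl bil, bilinDr bil); zmod_solve.
Qed.

Lemma mem_sum_gradingA k a : a \in HA k -> (a, 0) \in HAB k.
Proof. by rewrite mem_sum_grading /= (subspace0 (subB k)) andbT. Qed.

Lemma mem_sum_gradingB k b : b \in HB k -> (0, b) \in HAB k.
Proof. by rewrite mem_sum_grading /= (subspace0 (subA k)). Qed.

Ltac expand_jacobiator Hx Hy Hz :=
  rewrite /jacobiator
    (knitted_bracket_hom Hx (knitted_bracket_deg Hy Hz)) (knitted_bracket_hom Hy Hz)
    (knitted_bracket_hom Hy (knitted_bracket_deg Hz Hx)) (knitted_bracket_hom Hz Hx)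
    (knitted_bracket_hom Hz (knitted_bracket_deg Hx Hy)) (knitted_bracket_hom Hx Hy) /=;
  bilin_simp; apply: injective_projections => /=.

Lemma jacobiator_AAA i j l a1 a2 a3 : a1 \in HA i -> a2 \in HA j -> a3 \in HA l ->
  jacobiator i j l (a1, 0) (a2, 0) (a3, 0) = 0.
Proof.
move=> Ha1 Ha2 Ha3.
expand_jacobiator (mem_sum_gradingA Ha1) (mem_sum_gradingA Ha2) (mem_sum_gradingA Ha3).
- by case: lieA => _ _ _ _; apply.
- by bilin_simp.
Qed.

Lemma jacobiator_BBB i j l b1 b2 b3 : b1 \in HB i -> b2 \in HB j -> b3 \in HB l ->
  jacobiator i j l (0, b1) (0, b2) (0, b3) = 0.
Proof.
move=> Hb1 Hb2 Hb3.
expand_jacobiator (mem_sum_gradingB Hb1) (mem_sum_gradingB Hb2) (mem_sum_gradingB Hb3).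
- by bilin_simp.
- by case: lieB => _ _ _ _; apply.
Qed.

Lemma jacobiator_AAB i j l a1 a2 b : a1 \in HA i -> a2 \in HA j -> b \in HB l ->
  jacobiator i j l (a1, 0) (a2, 0) (0, b) = 0.
Proof.
move=> Ha1 Ha2 Hb.
expand_jacobiator (mem_sum_gradingA Ha1) (mem_sum_gradingA Ha2) (mem_sum_gradingB Hb).
- case: knitted => _ _ _ knit_beta; case: lieA => _ _ _ antiA _.
  rewrite (knit_beta _ _ _ _ _ _ Hb Ha1 Ha2) (@antiA j (l + i) a2 (beta b a1)) //;
    last by hom_mem.
  by gsign_cases; zmod_solve.
- case: knitted => [[_ _ rep_alpha]] _ _ _.
  by rewrite (rep_alpha _ _ _ _ Ha1 Ha2); gsign_cases; zmod_solve.
Qed.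

Lemma jacobiator_ABB i j l a b1 b2 : a \in HA i -> b1 \in HB j -> b2 \in HB l ->
  jacobiator i j l (a, 0) (0, b1) (0, b2) = 0.
Proof.
move=> Ha Hb1 Hb2.
expand_jacobiator (mem_sum_gradingA Ha) (mem_sum_gradingB Hb1) (mem_sum_gradingB Hb2).
- case: knitted => _ [_ _ rep_beta] _ _.
  by rewrite (rep_beta _ _ _ _ Hb1 Hb2); gsign_cases; zmod_solve.
- case: knitted => _ _ knit_alpha _; case: lieB => _ _ _ antiB _.
  rewrite (knit_alpha _ _ _ _ _ _ Ha Hb1 Hb2) (@antiB l (j + i) b2 (alpha a b1)) //;
    last by hom_mem.
  by gsign_cases; zmod_solve.
Qed.

Definition pure_hom k (x : A * B) :=
  (x.1 \in HA k) && (x.2 == 0) || (x.1 == 0) && (x.2 \in HB k).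

Lemma jacobiator_pure i j l x y z :
  pure_hom i x -> pure_hom j y -> pure_hom l z -> jacobiator i j l x y z = 0.
Proof.
case: x y z => [a1 b1] [a2 b2] [a3 b3]; rewrite /pure_hom /=.
case/orP=> [/andP[H1 /eqP->]|/andP[/eqP-> H1]];
  case/orP=> [/andP[H2 /eqP->]|/andP[/eqP-> H2]];
  case/orP=> [/andP[H3 /eqP->]|/andP[/eqP-> H3]].
- exact: jacobiator_AAA.
- exact: jacobiator_AAB.
- by rewrite 2!jacobiator_rot; apply: jacobiator_AAB.
- exact: jacobiator_ABB.
- by rewrite jacobiator_rot; apply: jacobiator_AAB.
- by rewrite jacobiator_rot; apply: jacobiator_ABB.
- by rewrite 2!jacobiator_rot; apply: jacobiator_ABB.
- exact: jacobiator_BBB.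
Qed.

Lemma jacobiator_hom_of_pure i j l x y z : x \in HAB i ->
  (forall x', pure_hom i x' -> jacobiator i j l x' y z = 0) ->
  jacobiator i j l x y z = 0.
Proof.
case: x => a b; rewrite mem_sum_grading => /andP[/= Ha Hb] pure0.
have -> : (a, b) = (a, 0) + (0, b).
  by apply: injective_projections; rewrite /= ?addr0 ?add0r.
by rewrite jacobiatorDl !pure0 ?addr0 // /pure_hom /= ?Ha ?Hb ?eqxx ?orbT.
Qed.

Lemma knitted_bracket_jacobi i j l x y z :
  x \in HAB i -> y \in HAB j -> z \in HAB l -> jacobiator i j l x y z = 0.
Proof.
move=> Hx Hy Hz; apply: jacobiator_hom_of_pure Hx _ => x' px.
rewrite jacobiator_rot; apply: jacobiator_hom_of_pure Hy _ => y' py.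
rewrite jacobiator_rot; apply: jacobiator_hom_of_pure Hz _ => z' pz.
by rewrite jacobiator_rot; apply: jacobiator_pure.
Qed.

Lemma knitted_bracket_graded_lie : graded_lie HAB br.
Proof.
split.
- exact: sum_grading_graded.
- exact: knitted_bracket_bilinear.
- exact: knitted_bracket_deg.
- exact: knitted_bracket_anti.
- exact: knitted_bracket_jacobi.
Qed.

End KnittedSum.

Theorem theorem1p2 (K : fieldType) (g : grading) (A B : lmodType K)
  (HA : degT g -> pred A) (HB : degT g -> pred B)
  (brA : A -> A -> A) (brB : B -> B -> B)
  (alpha : A -> B -> B) (beta : B -> A -> A) :
  graded_lie HA brA -> graded_lie HB brB ->
  knitted_pair HA brA HB brB alpha beta ->
  exists br : (A * B)%type -> (A * B)%type -> (A * B)%type,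
    graded_lie (sum_grading HA HB) br /\
    (forall (i j : degT g) (a1 a2 : A) (b1 b2 : B),
       a1 \in HA i -> b1 \in HB i -> a2 \in HA j -> b2 \in HB j ->
       br (a1, b1) (a2, b2) =
         (brA a1 a2 + beta b1 a2 - gsign K j i *: beta b2 a1,
          brB b1 b2 + alpha a1 b2 - gsign K j i *: alpha a2 b1)).
Proof.
move=> lieA lieB knitted.
exists (knitted_bracket HA HB brA brB alpha beta); split.
  exact: knitted_bracket_graded_lie.
move=> i j a1 a2 b1 b2 Ha1 Hb1 Ha2 Hb2.
by apply: knitted_bracket_hom => //; rewrite mem_sum_grading; apply/andP.
Qed.
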